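(* Let $C$ be the cube in $\mathbb{R}^3$, with its $8$ vertices and $12$ edges, and let $G_C$ be its rotation group (isomorphic to $S_4$, of order $24$). The number of $G_C$-orbits of incomplete open cubes (as defined in the context) is exactly $122$.
   Context: Let $P$ be a convex polyhedron in $\mathbb{R}^3$ with vertex set $V$ and edge set $E$ (each edge a pair of vertices). For a subset $S\subseteq E$, let $V(S)$ be the set of vertices incident to at least one edge of $S$, and let $\Gamma(S)$ be the graph with vertex set $V(S)$ and edge set $S$. An incomplete open $P$ is a subset $S\subseteq E$ such that: (i) $S\neq\emptyset$ and $S\neq E$; (ii) $\Gamma(S)$ is connected; (iii) $S$ is non-planar, i.e. the points of $V(S)$ (as points of $\mathbb{R}^3$) are not all contained in a single affine plane. The rotation group of $P$ (orientation-preserving isometries of $\mathbb{R}^3$ mapping $P$ to itself) permutes $V$ and $E$, and hence acts on subsets of $E$; this action preserves the property of being an incomplete open $P$. Incomplete open $P$ are counted up to this action, i.e. one counts orbits; two mirror-image subsets not related by a rotation are counted separately. *)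

From mathcomp Require Import all_boot all_order all_algebra.
From mathcomp Require Import reals.
Set Implicit Arguments. Unset Strict Implicit. Unset Printing Implicit Defensive.
Import Order.TTheory GRing.Theory Num.Theory.
Local Open Scope ring_scope.

(* Vertices of the cube: sign patterns in {+1,-1}^3. *)
Definition cvert := {ffun 'I_3 -> bool}.

Definition cpt (R : realType) (v : cvert) : 'rV[R]_3 :=
  \row_(i < 3) (if v i then 1 else -1).

Definition cube_edges : {set {set cvert}} :=
  [set [set u; v] | u in cvert, v in cvert & #|[set i | u i != v i]| == 1%N].

Definition Vof (S : {set {set cvert}}) : {set cvert} := \bigcup_(e in S) e.

Definition Gamma_connected (S : {set {set cvert}}) : Prop :=
  forall u v, u \in Vof S -> v \in Vof S ->
    connect (fun x y => [set x; y] \in S) u v.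

Definition planar (R : realType) (S : {set {set cvert}}) : Prop :=
  exists (a : 'rV[R]_3) (d : R), a != 0 /\
    forall v, v \in Vof S -> \sum_(i < 3) a 0 i * cpt R v 0 i = d.

Definition incomplete_open (R : realType) (S : {set {set cvert}}) : Prop :=
  [/\ S \subset cube_edges, S != set0, S != cube_edges,
      Gamma_connected S & ~ planar R S].

Definition is_SO3 (R : realType) (Q : 'M[R]_3) : Prop :=
  Q *m Q^T = 1%:M /\ \det Q = 1.

(* The isometry maps the cube to itself (equivalently, its vertex set to itself). *)
Definition cube_rotation (R : realType) (Q : 'M[R]_3) (t : 'rV[R]_3) : Prop :=
  is_SO3 Q /\ forall v, exists w, cpt R w = cpt R v *m Q + t.

Definition rot_img (R : realType) (Q : 'M[R]_3) (t : 'rV[R]_3)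
  (e : {set cvert}) : {set cvert} :=
  [set w | [exists u in e, cpt R w == cpt R u *m Q + t]].

Definition same_orbit (R : realType) (S S' : {set {set cvert}}) : Prop :=
  exists (Q : 'M[R]_3) (t : 'rV[R]_3),
    cube_rotation Q t /\ S' = [set rot_img Q t e | e in S].

(* A rotation of the cube permutes the vertices affinely, so it is determined by the
   images of vertex 0 and of its three neighbours: the rotations are the candidates
   among these 8^4 choices with determinant 1 that send every vertex to a vertex, and each
   of them permutes the 12 edges.  Encoding edge sets as 12-bit masks, an exhaustive check
   shows that every mask which is nonempty, not full, connected and not contained in a face
   is moved by one of these edge permutations onto one of 122 listed masks, and that no
   listed mask is moved onto another one.  An edge set contained in a face is planar, and
   every listed mask has edges in all three directions, which forces non-planarity. *)

From mathcomp Require Import all_boot all_order all_algebra.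
From mathcomp Require Import reals.
From mathcomp Require Import ring lra.
Set Implicit Arguments. Unset Strict Implicit. Unset Printing Implicit Defensive.
Import Order.TTheory GRing.Theory Num.Theory.
Local Open Scope ring_scope.

Definition i0 : 'I_3 := @Ordinal 3 0 isT.
Definition i1 : 'I_3 := @Ordinal 3 1 isT.
Definition i2 : 'I_3 := @Ordinal 3 2 isT.

Lemma ord3P (i : 'I_3) : [\/ i = i0, i = i1 | i = i2].
Proof.
case: i => [[|[|[|//]]] ?]; [constructor 1 | constructor 2 | constructor 3]; exact: val_inj.
Qed.

Lemma sum3 (V : nmodType) (F : 'I_3 -> V) : \sum_(i < 3) F i = F i0 + F i1 + F i2.
Proof.
by rewrite !big_ord_recr big_ord0 /= add0r; congr (F _ + F _ + F _); exact: val_inj.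
Qed.

Lemma forall_iotaP (P : nat -> bool) n : all P (iota 0 n) -> forall k, (k < n)%N -> P k.
Proof. by move=> /allP H k lt_kn; apply: H; rewrite mem_iota. Qed.

Fixpoint words (T : Type) (A : seq T) (n : nat) : seq (seq T) :=
  if n is n'.+1 then [seq a :: w | a <- A, w <- words A n'] else [:: [::]].

Lemma mem_words (T : eqType) (A : seq T) w : {subset w <= A} -> w \in words A (size w).
Proof.
elim: w => //= a w IHw sub; apply: allpairs_f; first by apply: sub; rewrite mem_head.
by apply: IHw => x xw; apply: sub; rewrite inE xw orbT.
Qed.

Definition bit (n i : nat) : bool := odd (n %/ 2 ^ i).
Definition vert (n : nat) : cvert := [ffun i : 'I_3 => bit n i].
Definition vcode (v : cvert) : nat := v i0 + 2 * v i1 + 4 * v i2.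

Lemma vcode_lt8 v : (vcode v < 8)%N.
Proof. by rewrite /vcode; case: (v i0) (v i1) (v i2) => [] [] []. Qed.

Lemma vcodeK : cancel vcode vert.
Proof.
move=> v; apply/ffunP => i; rewrite ffunE /vcode.
by case: (ord3P i) => ->; case: (v i0) (v i1) (v i2) => [] [] [].
Qed.

Lemma vertK n : (n < 8)%N -> vcode (vert n) = n.
Proof. by rewrite /vcode !ffunE; do 8 (case: n => [//|n]). Qed.

Lemma eq_vert m n : (m < 8)%N -> (n < 8)%N -> (vert m == vert n) = (m == n).
Proof. by move=> lt_m lt_n; apply/eqP/eqP => [/(congr1 vcode)|->]; rewrite ?vertK. Qed.

Definition sgn (b : bool) : int := if b then 1 else -1.

Section Coordinates.
Variable R : realType.

Lemma intr_sgn b : (sgn b)%:~R = (if b then 1 else -1 : R).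
Proof. by case: b. Qed.

Lemma cpt_vert n j : cpt R (vert n) 0 j = (sgn (bit n j))%:~R.
Proof. by rewrite mxE ffunE intr_sgn. Qed.

Lemma cpt_inj : injective (cpt R).
Proof.
move=> u v /rowP e; apply/ffunP => j; have := e j; rewrite !mxE.
by case: (u j) (v j) => [] [] // h; exfalso; lra.
Qed.

End Coordinates.

Lemma card3 (P : pred 'I_3) : #|[set i | P i]| = (P i0 + P i1 + P i2)%N.
Proof. by rewrite -sum1_card big_mkcond /= sum3 !inE; case: (P i0) (P i1) (P i2) => [] [] []. Qed.

Lemma set2_eq (T : finType) (x y x' y' : T) :
  [set x; y] = [set x'; y'] -> (x = x' /\ y = y') \/ (x = y' /\ y = x').
Proof.
move=> E; have hx : x \in [set x'; y'] by rewrite -E set21.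
have hy : y \in [set x'; y'] by rewrite -E set22.
have hx' : x' \in [set x; y] by rewrite E set21.
have hy' : y' \in [set x; y] by rewrite E set22.
move: hx hy hx' hy'; rewrite !inE.
by do 4 case/orP=> /eqP ?; subst; auto.
Qed.

Definition edge_ends : seq (nat * nat) :=
  [seq (c, c + 2 ^ i)%N | i <- iota 0 3, c <- [seq c <- iota 0 8 | ~~ bit c i]].
Definition edge (e : nat * nat) : {set cvert} := [set vert e.1; vert e.2].
Definition edge_set (m : seq bool) : {set {set cvert}} := [set:: map edge (mask m edge_ends)].
Definition edge_mask (S : {set {set cvert}}) : seq bool := [seq edge e \in S | e <- edge_ends].

Lemma size_edge_ends : size edge_ends = 12%N. Proof. by []. Qed.
Lemma uniq_edge_ends : uniq edge_ends. Proof. by []. Qed.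

Lemma edge_ends_lt8 e : e \in edge_ends -> (e.1 < 8)%N && (e.2 < 8)%N.
Proof. by move: e; apply/allP. Qed.

Lemma bit_add_pow2 c i j : (c < 8)%N -> (i < 3)%N -> (j < 3)%N -> ~~ bit c i ->
  bit (c + 2 ^ i) j = bit c j || (i == j).
Proof.
have chk : all (fun c => all (fun i => all (fun j => ~~ bit c i ==>
  (bit (c + 2 ^ i) j == bit c j || (i == j))) (iota 0 3)) (iota 0 3)) (iota 0 8) by [].
move=> lt_c lt_i lt_j nbi.
exact/eqP/(implyP (forall_iotaP (forall_iotaP (forall_iotaP chk lt_c) lt_i) lt_j)).
Qed.

Lemma edge_ends_dir e i : e \in edge_ends -> (i < 3)%N -> e.2 = (e.1 + 2 ^ i)%N -> ~~ bit e.1 i.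
Proof.
have chk : all (fun e => all (fun i => (e.2 == e.1 + 2 ^ i)%N ==> ~~ bit e.1 i) (iota 0 3))
  edge_ends by [].
by move=> /(allP chk) /forall_iotaP H lt_i /eqP /(implyP (H _ lt_i)).
Qed.

Lemma edge_inj : {in edge_ends &, injective edge}.
Proof.
have ord : all (fun e => (e.1 < e.2)%N) edge_ends by [].
move=> e e' he he' /set2_eq.
have /andP[a8 b8] := edge_ends_lt8 he; have /andP[a8' b8'] := edge_ends_lt8 he'.
have := allP ord _ he; have := allP ord _ he'.
case: e e' {he he'} a8 b8 a8' b8' => [a b] [a' b'] /= a8 b8 a8' b8' lt' lt.
case=> -[/eqP + /eqP]; rewrite !eq_vert // => /eqP ea /eqP eb; subst a b => //.
by rewrite ltnNge (ltnW lt') in lt.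
Qed.

Lemma edge_cube e : e \in edge_ends -> edge e \in cube_edges.
Proof.
move=> he; apply/imset2P; exists (vert e.1) (vert e.2) => //.
rewrite inE /= card3 !ffunE.
have chk : all (fun e => ((bit e.1 0 != bit e.2 0) + (bit e.1 1 != bit e.2 1)
  + (bit e.1 2 != bit e.2 2) == 1)%N) edge_ends by [].
exact: (allP chk).
Qed.

Lemma cube_edgeP S : S \in cube_edges -> exists2 e, e \in edge_ends & S = edge e.
Proof.
case/imset2P => u v _; rewrite inE /= card3 => + ->.
rewrite -(vcodeK u) -(vcodeK v) !ffunE.
have chk : all (fun a => all (fun b => ((bit a 0 != bit b 0) + (bit a 1 != bit b 1)
  + (bit a 2 != bit b 2) == 1)%N ==> has (fun e => (e == (a, b)) || (e == (b, a))) edge_ends)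
  (iota 0 8)) (iota 0 8) by [].
move/(implyP (forall_iotaP (forall_iotaP chk (vcode_lt8 u)) (vcode_lt8 v))) => /hasP[e he].
by case/orP=> /eqP ee; exists e; rewrite // ee /edge // setUC.
Qed.

Lemma edge_setP m S : reflect (exists2 e, e \in mask m edge_ends & S = edge e) (S \in edge_set m).
Proof. by rewrite inE; apply: mapP. Qed.

Lemma edge_set_sub m : edge_set m \subset cube_edges.
Proof. by apply/subsetP => S /edge_setP[e /mem_mask he ->]; apply: edge_cube. Qed.

Lemma edge_set_nth m k : (k < 12)%N ->
  (edge (nth (0, 0)%N edge_ends k) \in edge_set m) = nth false m k.
Proof.
move=> lt_k; have hk : nth (0, 0)%N edge_ends k \in edge_ends by rewrite mem_nth.
apply/edge_setP/idP => [[e he eq_e]|mk].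
  have ee := edge_inj hk (mem_mask he) eq_e.
  by move: he; rewrite -ee in_mask ?uniq_edge_ends // index_uniq ?uniq_edge_ends // => /andP[].
exists (nth (0, 0)%N edge_ends k) => //.
by rewrite in_mask ?uniq_edge_ends // hk index_uniq ?uniq_edge_ends.
Qed.

Lemma edge_set_nthP m S : reflect
  (exists2 k, (k < 12)%N && nth false m k & S = edge (nth (0, 0)%N edge_ends k))
  (S \in edge_set m).
Proof.
apply: (iffP idP) => [S_m | [k /andP[lt_k mk] ->]]; last by rewrite edge_set_nth.
have /edge_setP[x xm eS] := S_m; have x_ends := mem_mask xm.
have lt_x : (index x edge_ends < 12)%N by rewrite -size_edge_ends index_mem.
exists (index x edge_ends); last by rewrite nth_index.
by rewrite lt_x -edge_set_nth // nth_index // -eS.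
Qed.

Lemma edge_set_inj m m' : size m = 12%N -> size m' = 12%N -> edge_set m = edge_set m' -> m = m'.
Proof.
move=> sz sz' eq_m; apply: (@eq_from_nth _ false); first by rewrite sz sz'.
by move=> k; rewrite sz => lt_k; rewrite -!edge_set_nth // eq_m.
Qed.

Lemma size_edge_mask (S : {set {set cvert}}) : size (edge_mask S) = 12%N.
Proof. by rewrite size_map. Qed.

Lemma edge_maskK (S : {set {set cvert}}) : S \subset cube_edges -> edge_set (edge_mask S) = S.
Proof.
move=> /subsetP sub; apply/setP => e; rewrite /edge_set /edge_mask -filter_mask inE.
apply/mapP/idP => [[x] | eS]; first by rewrite mem_filter => /andP[xS _] ->.
by have [x hx ex] := cube_edgeP (sub _ eS); exists x; rewrite // mem_filter -ex eS.
Qed.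

Section EdgeLists.
Variable E : seq (nat * nat).

Definition touches c := has (fun e => c \in [:: e.1; e.2]) E.
Definition grow (s : seq nat) :=
  undup (s ++ [seq e.2 | e <- E & e.1 \in s] ++ [seq e.1 | e <- E & e.2 \in s]).
(* Completeness of [reach] does not rest on the number of rounds: it follows from
   [edge_closed], which is checked for every mask. *)
Definition reach r := iter 7 grow [:: r].
Definition edge_closed (s : seq nat) := all (fun e => (e.1 \in s) == (e.2 \in s)) E.
Definition connectedb :=
  let C := reach (head (0, 0)%N E).1 in all (fun c => touches c ==> (c \in C)) (iota 0 8).
Definition on_face := has (fun i => has (fun b =>
  all (fun c => touches c ==> (bit c i == b)) (iota 0 8)) [:: true; false]) (iota 0 3).
Definition spans_dirs := all (fun i => has (fun e => e.2 == e.1 + 2 ^ i)%N E) (iota 0 3).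

Lemma mem_grow s : {subset s <= grow s}.
Proof. by move=> c cs; rewrite mem_undup mem_cat cs. Qed.

Lemma mem_reach r : r \in reach r.
Proof. by rewrite /reach; elim: 7%N => [|n IH] /=; [apply: mem_head | apply: mem_grow]. Qed.

End EdgeLists.

Section MaskGraph.
Variable m : seq bool.
Local Notation E := (mask m edge_ends).
Local Notation adjacent := (fun u v => [set u; v] \in edge_set m).

Lemma mask_ends_lt8 e : e \in E -> (e.1 < 8)%N && (e.2 < 8)%N.
Proof. by move/mem_mask; apply: edge_ends_lt8. Qed.

Lemma adjacent_ends e : e \in E -> adjacent (vert e.1) (vert e.2).
Proof. by move=> eE; apply/edge_setP; exists e. Qed.

Lemma adjacent_sym : symmetric adjacent.
Proof. by move=> u v; rewrite setUC. Qed.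

Lemma Vof_edge_set c : (c < 8)%N -> (vert c \in Vof (edge_set m)) = touches E c.
Proof.
move=> lt_c; apply/bigcupP/hasP => [[S /edge_setP[e eE ->]] | [e eE ce]].
  have /andP[lt1 lt2] := mask_ends_lt8 eE.
  by rewrite /edge !inE !eq_vert // => ce; exists e; rewrite // !inE.
exists (edge e); first by apply/edge_setP; exists e.
have /andP[lt1 lt2] := mask_ends_lt8 eE.
by move: ce; rewrite /edge !inE !eq_vert.
Qed.

Lemma reach_connect r n c : c \in iter n (grow E) [:: r] -> connect adjacent (vert r) (vert c).
Proof.
elim: n c => [|n IH] c /=; first by rewrite inE => /eqP ->; apply: connect0.
rewrite mem_undup !mem_cat => /or3P[/IH // | | ] /mapP[e]; rewrite mem_filter => /andP[he eE] ->.
  exact: connect_trans (IH _ he) (connect1 (adjacent_ends eE)).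
by apply: connect_trans (IH _ he) (connect1 _); rewrite adjacent_sym adjacent_ends.
Qed.

Lemma connect_closed_codes s u v :
  edge_closed E s -> connect adjacent u v -> (vcode u \in s) = (vcode v \in s).
Proof.
move=> /allP cl; apply: (closed_connect (a := [pred w | vcode w \in s])) => x y.
case/edge_setP => e eE /set2_eq; have /andP[lt1 lt2] := mask_ends_lt8 eE.
have := cl _ eE => /eqP cl_e.
by case=> -[-> ->]; rewrite !inE !vertK.
Qed.

Lemma connectedbP : edge_closed E (reach E (head (0, 0)%N E).1) ->
  Gamma_connected (edge_set m) <-> connectedb E.
Proof.
rewrite /connectedb; set r := (head (0, 0)%N E).1 => cl.
have lt_r : (r < 8)%N.
  rewrite /r; case E0: (mask m edge_ends) => [//|e E'] /=.
  have : e \in mask m edge_ends by rewrite E0 mem_head.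
  by case/mask_ends_lt8/andP.
split => [conn | /allP conn u v Vu Vv].
  apply/allP => c; rewrite mem_iota => /andP[_ lt_c]; apply/implyP => tc.
  have Vr : vert r \in Vof (edge_set m).
    rewrite Vof_edge_set // /r; case E0: (mask m edge_ends) tc => [//|e E'] _.
    by rewrite /= inE eqxx.
  have := conn _ (vert c) Vr; rewrite Vof_edge_set // => /(_ tc).
  by move/(connect_closed_codes cl); rewrite (vertK lt_r) (vertK lt_c) => <-; apply: mem_reach.
have reach_V w : w \in Vof (edge_set m) -> connect adjacent (vert r) w.
  rewrite -{1 2}(vcodeK w) Vof_edge_set ?vcode_lt8 // => tw.
  apply: (@reach_connect _ 7%N); apply: (implyP (conn _ _)) => //.
  by rewrite mem_iota vcode_lt8.
apply: connect_trans (reach_V _ Vv).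
by rewrite (sym_connect_sym adjacent_sym); apply: reach_V.
Qed.
End MaskGraph.

Lemma cpt_add_pow2 (R : realType) c (i : 'I_3) : (c < 8)%N -> ~~ bit c i ->
  cpt R (vert (c + 2 ^ i)) = cpt R (vert c) + 2 *: 'e_i.
Proof.
move=> lt_c nbi; apply/rowP => j; rewrite !mxE !ffunE bit_add_pow2 //.
case: (eqVneq (i : nat) j) => [/val_inj <- | nij]; first by rewrite (negbTE nbi) !eqxx /=; lra.
have nji : (j == i) = false by apply/negbTE; rewrite eq_sym; exact: nij.
by rewrite nji orbF andbF mulr0 addr0.
Qed.

Lemma dot_delta (R : realType) (x : 'rV[R]_3) (i : 'I_3) :
  \sum_(j < 3) ('e_i : 'rV[R]_3) 0 j * x 0 j = x 0 i.
Proof.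
rewrite (bigD1 i) //= big1 => [|j nji]; first by rewrite mxE !eqxx mul1r addr0.
by rewrite mxE (negbTE nji) mul0r.
Qed.

Section Planarity.
Variables (R : realType) (m : seq bool).
Local Notation E := (mask m edge_ends).

Lemma touches_ends e : e \in E -> touches E e.1 && touches E e.2.
Proof. by move=> eE; apply/andP; split; apply/hasP; exists e; rewrite // !inE eqxx ?orbT. Qed.

Lemma on_face_planar : on_face E -> planar R (edge_set m).
Proof.
case/hasP => i; rewrite mem_iota => /andP[_ lt_i] /hasP[b _ /allP face].
exists 'e_(Ordinal lt_i), (sgn b)%:~R; split.
  by apply/eqP => /rowP/(_ (Ordinal lt_i)); rewrite !mxE !eqxx; apply/eqP; rewrite oner_eq0.
move=> v; rewrite -(vcodeK v) Vof_edge_set ?vcode_lt8 // => tv.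
rewrite dot_delta cpt_vert.
have cV : vcode v \in iota 0 8 by rewrite mem_iota vcode_lt8.
by have /eqP <- := implyP (face _ cV) tv.
Qed.

Lemma spans_dirs_nonplanar : spans_dirs E -> ~ planar R (edge_set m).
Proof.
move=> /allP dirs [a [d [/eqP a_nz on_plane]]]; apply: a_nz; apply/rowP => i; rewrite mxE.
have /hasP[e eE /eqP e2] : has (fun e => e.2 == e.1 + 2 ^ i)%N E.
  by apply: dirs; rewrite mem_iota ltn_ord.
have /andP[lt1 lt2] := mask_ends_lt8 eE; have /andP[t1 t2] := touches_ends eE.
have plane c : (c < 8)%N -> touches E c -> \sum_(j < 3) a 0 j * cpt R (vert c) 0 j = d.
  by move=> lt_c tc; apply: on_plane; rewrite Vof_edge_set.
have := plane _ lt2 t2; rewrite e2 cpt_add_pow2 ?(edge_ends_dir (mem_mask eE)) //.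
under eq_bigr => j _ do rewrite [X in _ * X]mxE [X in _ * (_ + X)]mxE mulrDr
  [a 0 j * (2 * _)]mulrC -mulrA.
by rewrite big_split /= plane // -mulr_sumr dot_delta; lra.
Qed.
End Planarity.

(* A frame [w = [:: w0; w1; w2; w4]] lists the images of the vertices 0, 1, 2, 4. Row [i]
   of the corresponding matrix is half the difference of the sign vectors of [w_(i+1)] and
   [w0], and [frame_coord w c] is the sign vector of the image of vertex [c]. *)
Definition frame_entry (w : seq nat) (i j : nat) : int :=
  let b := bit (nth 0%N w i.+1) j in if b == bit (nth 0%N w 0) j then 0 else sgn b.
Definition frame_coord w c j : int :=
  sgn (bit (nth 0%N w 0) j) + 2 * ((bit c 0)%:R * frame_entry w 0 j
    + (bit c 1)%:R * frame_entry w 1 j + (bit c 2)%:R * frame_entry w 2 j).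
Definition det3 (R : pzRingType) (f : nat -> nat -> R) : R :=
  f 0%N 0%N * (f 1%N 1%N * f 2%N 2%N - f 1%N 2%N * f 2%N 1%N)
  - f 0%N 1%N * (f 1%N 0%N * f 2%N 2%N - f 1%N 2%N * f 2%N 0%N)
  + f 0%N 2%N * (f 1%N 0%N * f 2%N 1%N - f 1%N 1%N * f 2%N 0%N).
Definition maps_to w c n := all (fun j => sgn (bit n j) == frame_coord w c j) (iota 0 3).
Definition is_frame w :=
  if det3 (frame_entry w) == 1 then all (fun c => has (maps_to w c) (iota 0 8)) (iota 0 8)
  else false.
Definition cube_frames := [seq w <- words (iota 0 8) 4 | is_frame w].
Definition frame_orthogonal w := all (fun i => all (fun j =>
  frame_entry w i 0 * frame_entry w j 0 + frame_entry w i 1 * frame_entry w j 1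
  + frame_entry w i 2 * frame_entry w j 2 == (i == j)%:R) (iota 0 3)) (iota 0 3).

Definition frame_vert w c := find (maps_to w c) (iota 0 8).
Definition joins k a b := let e := nth (0, 0)%N edge_ends k in (e == (a, b)) || (e == (b, a)).
Definition frame_edges w :=
  [seq find (fun k => joins k (frame_vert w e.1) (frame_vert w e.2)) (iota 0 12) | e <- edge_ends].
Definition inverse_perm (p : seq nat) := [seq index k p | k <- iota 0 (size p)].
Definition pullback (q : seq nat) (m : seq bool) := [seq nth false m k | k <- q].

Lemma cube_frames_ok :
  all (fun w => frame_orthogonal w && perm_eq (frame_edges w) (iota 0 12)) cube_frames.
Proof. by vm_compute. Qed.

Lemma det_mx3 (R : comPzRingType) (f : nat -> nat -> R) :
  \det (\matrix_(i < 3, j < 3) f i j) = det3 f.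
Proof.
rewrite (expand_det_row _ 0) !big_ord_recr big_ord0 /= /cofactor.
rewrite !(expand_det_row _ 0) !big_ord_recr !big_ord0 /= /cofactor.
rewrite !(expand_det_row _ 0) !big_ord_recr !big_ord0 /= /cofactor.
rewrite !det_mx00 !mxE /= !expr0 !expr1 /bump /= /det3; ring.
Qed.

Section Frames.
Variable R : realType.

Definition frame_Q w : 'M[R]_3 := map_mx intr (\matrix_(i < 3, j < 3) frame_entry w i j).
Definition frame_t w : 'rV[R]_3 := cpt R (vert (nth 0%N w 0)) - cpt R (vert 0) *m frame_Q w.

Lemma frame_image w c : (c < 8)%N ->
  cpt R (vert c) *m frame_Q w + frame_t w = map_mx intr (\row_(j < 3) frame_coord w c j).
Proof.
move=> lt_c; apply/rowP => j; rewrite !mxE !sum3 !cpt_vert !mxE !ffunE /frame_coord.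
rewrite !intrD !intrM !intr_sgn /=.
by case: (bit c 0) (bit c 1) (bit c 2) (bit (nth 0%N w 0) j) => [] [] [] [] /=; ring.
Qed.

Lemma maps_toP w c n : (c < 8)%N ->
  reflect (cpt R (vert n) = cpt R (vert c) *m frame_Q w + frame_t w) (maps_to w c n).
Proof.
move=> lt_c; rewrite frame_image //; apply: (iffP allP) => [h | /rowP h j].
  apply/rowP => j; rewrite cpt_vert !mxE; congr intr; apply/eqP/h.
  by rewrite mem_iota ltn_ord.
rewrite mem_iota => /andP[_ lt_j]; have := h (Ordinal lt_j).
by rewrite cpt_vert !mxE => /intr_inj ->.
Qed.

Lemma frame_vertP w c : is_frame w -> (c < 8)%N ->
  (frame_vert w c < 8)%N /\
  cpt R (vert (frame_vert w c)) = cpt R (vert c) *m frame_Q w + frame_t w.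
Proof.
rewrite /is_frame; case: ifP => // _ /allP onto lt_c.
have ex : has (maps_to w c) (iota 0 8) by apply: onto; rewrite mem_iota.
have lt_v : (frame_vert w c < 8)%N by rewrite /frame_vert -(size_iota 0 8) -has_find.
split=> //; apply/(maps_toP _ _ lt_c).
by have := nth_find 0%N ex; rewrite nth_iota.
Qed.

Lemma frame_rotation w : w \in cube_frames -> cube_rotation (frame_Q w) (frame_t w).
Proof.
move=> wF; have /andP[orth _] := allP cube_frames_ok w wF.
move: wF; rewrite mem_filter => /andP[fw _].
have det1 : det3 (frame_entry w) = 1 by move: fw; rewrite /is_frame; case: eqP.
split; [split | ].
- rewrite /frame_Q map_trmx -map_mxM; set M := \matrix_(i, j) _.
  suff -> : M *m M^T = 1%:M by rewrite map_mx1.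
  apply/matrixP => i k; rewrite !mxE sum3 !mxE; apply/eqP.
  exact: (forall_iotaP (forall_iotaP orth (ltn_ord i)) (ltn_ord k)).
- by rewrite /frame_Q det_map_mx det_mx3 det1 rmorph1.
- move=> v; exists (vert (frame_vert w (vcode v))).
  by have [_ ->] := frame_vertP fw (vcode_lt8 v); rewrite vcodeK.
Qed.

Lemma rot_img2 (Q : 'M[R]_3) t x y x' y' :
  cpt R x' = cpt R x *m Q + t -> cpt R y' = cpt R y *m Q + t ->
  rot_img Q t [set x; y] = [set x'; y'].
Proof.
move=> ex ey; apply/setP => z; rewrite inE; apply/existsP/idP.
  case=> u /andP[]; rewrite !inE => /orP[] /eqP -> /eqP ez; apply/orP.
    by left; apply/eqP; apply: (@cpt_inj R); rewrite ez ex.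
  by right; apply/eqP; apply: (@cpt_inj R); rewrite ez ey.
rewrite !inE => /orP[] /eqP ->; [exists x | exists y]; by rewrite !inE ?ex ?ey !eqxx ?orbT.
Qed.

Lemma frame_edge_image w k : w \in cube_frames -> (k < 12)%N ->
  rot_img (frame_Q w) (frame_t w) (edge (nth (0, 0)%N edge_ends k))
  = edge (nth (0, 0)%N edge_ends (nth 0%N (frame_edges w) k)).
Proof.
move=> wF lt_k; have /andP[_ perm_p] := allP cube_frames_ok w wF.
have fw : is_frame w by move: wF; rewrite mem_filter => /andP[].
have lt_p : (nth 0%N (frame_edges w) k < 12)%N.
  have : nth 0%N (frame_edges w) k \in iota 0 12.
    by rewrite -(perm_mem perm_p) mem_nth // (perm_size perm_p) size_iota.
  by rewrite mem_iota.
rewrite /frame_edges (nth_map (0, 0)%N) ?size_edge_ends // in lt_p *.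
set x := nth (0, 0)%N edge_ends k in lt_p *.
have /andP[lt1 lt2] : (x.1 < 8)%N && (x.2 < 8)%N.
  by apply: edge_ends_lt8; rewrite mem_nth ?size_edge_ends.
have [_ ha] := frame_vertP fw lt1; have [_ hb] := frame_vertP fw lt2.
move: (frame_vert w x.1) (frame_vert w x.2) ha hb lt_p => a b ha hb lt_p.
have J : has (fun k' => joins k' a b) (iota 0 12) by rewrite has_find size_iota.
have := nth_find 0%N J; rewrite (nth_iota _ _ lt_p) /edge (rot_img2 ha hb) /joins.
by case/orP => /eqP ->; last rewrite setUC.
Qed.

Lemma frame_edge_set w m : w \in cube_frames ->
  [set rot_img (frame_Q w) (frame_t w) S | S in edge_set m]
  = edge_set (pullback (inverse_perm (frame_edges w)) m).
Proof.
move=> wF; have /andP[_ perm_p] := allP cube_frames_ok w wF.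
have img := frame_edge_image wF; set p := frame_edges w in perm_p img *; clearbody p.
have sz_p : size p = 12%N by rewrite (perm_size perm_p) size_iota.
have uniq_p : uniq p by rewrite (perm_uniq perm_p) iota_uniq.
have pull k : (k < 12)%N ->
    nth false (pullback (inverse_perm p) m) k = nth false m (index k p).
  move=> lt_k; rewrite (nth_map 0%N) ?size_map ?size_iota ?sz_p //.
  by rewrite (nth_map 0%N) ?size_iota ?sz_p // nth_iota.
have p_lt k : (k < 12)%N -> (nth 0%N p k < 12)%N.
  move=> lt_k; have : nth 0%N p k \in iota 0 12 by rewrite -(perm_mem perm_p) mem_nth ?sz_p.
  by rewrite mem_iota.
apply/setP => S; apply/imsetP/edge_set_nthP.
  case=> S' /edge_set_nthP[k /andP[lt_k mk] ->] ->.
  exists (nth 0%N p k); last exact: img.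
  by rewrite p_lt // pull ?p_lt // index_uniq ?sz_p.
case=> k /andP[lt_k mk] ->.
have k_p : k \in p by rewrite (perm_mem perm_p) mem_iota.
have lt_i : (index k p < 12)%N by rewrite -sz_p index_mem.
exists (edge (nth (0, 0)%N edge_ends (index k p))); first by rewrite edge_set_nth -?pull.
by rewrite img // nth_index.
Qed.

Lemma rotation_frame Q t : cube_rotation Q t ->
  exists2 w, w \in cube_frames & Q = frame_Q w /\ t = frame_t w.
Proof.
case=> -[_ detQ] onto.
have onto' c : exists v, cpt R v == cpt R (vert c) *m Q + t.
  by have [v ev] := onto (vert c); exists v; apply/eqP.
pose img c := vcode (xchoose (onto' c)).
have imgP c : cpt R (vert (img c)) = cpt R (vert c) *m Q + t.
  by rewrite vcodeK; apply/eqP/(xchooseP (onto' c)).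
have img_lt c : img c \in iota 0 8 by rewrite mem_iota vcode_lt8.
clearbody img.
pose w := [:: img 0; img 1; img 2; img 4]%N.
have hQ : Q = frame_Q w.
  apply/matrixP => i j; rewrite !mxE.
  have wi : nth 0%N w i.+1 = img (2 ^ i)%N by case: (ord3P i) => ->.
  have : cpt R (vert (img (2 ^ i)%N)) = cpt R (vert (img 0)) + 2 *: row i Q.
    rewrite !imgP -[(2 ^ i)%N]add0n cpt_add_pow2 /bit ?div0n //.
    by rewrite mulmxDl -scalemxAl -rowE addrAC.
  move/rowP/(_ j); rewrite cpt_vert mxE cpt_vert !mxE /frame_entry wi /=.
  by case: (bit (img (2 ^ i)%N) j) (bit (img 0) j) => [] [] /= h; rewrite ?intr_sgn /=; lra.
have ht : t = frame_t w by rewrite /frame_t -hQ /= imgP addrAC subrr add0r.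
exists w => //; rewrite mem_filter; apply/andP; split.
  have det1 : det3 (frame_entry w) = 1.
    by apply: (@intr_inj R); rewrite rmorph1 -det_mx3 -det_map_mx -/(frame_Q w) -hQ.
  rewrite /is_frame det1 eqxx; apply/allP => c; rewrite mem_iota => /andP[_ lt_c].
  apply/hasP; exists (img c) => //.
  by apply/maps_toP; rewrite // -hQ -ht imgP.
apply: (mem_words (w := w)) => x; rewrite 4!in_cons in_nil orbF.
by case/or4P => /eqP ->.
Qed.
End Frames.

Definition mask_of_edges (ks : seq nat) := [seq k \in ks | k <- iota 0 12].
Definition orbit_reps : seq (seq nat) := [::
  [:: 3; 7; 11]; [:: 3; 7; 10]; [:: 3; 7; 10; 11]; [:: 3; 7; 9];
  [:: 3; 7; 9; 11]; [:: 3; 7; 9; 10]; [:: 3; 7; 9; 10; 11];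
  [:: 3; 6; 7; 10; 11]; [:: 3; 6; 7; 9]; [:: 3; 6; 7; 9; 11];
  [:: 3; 6; 7; 9; 10]; [:: 3; 6; 7; 9; 10; 11]; [:: 3; 6; 7; 8];
  [:: 3; 6; 7; 8; 11]; [:: 3; 6; 7; 8; 10]; [:: 3; 6; 7; 8; 10; 11];
  [:: 3; 6; 7; 8; 9]; [:: 3; 6; 7; 8; 9; 11]; [:: 3; 6; 7; 8; 9; 10];
  [:: 3; 6; 7; 8; 9; 10; 11]; [:: 3; 5; 9; 10; 11]; [:: 3; 5; 7; 9; 11];
  [:: 3; 5; 7; 9; 10]; [:: 3; 5; 7; 9; 10; 11]; [:: 3; 5; 6; 9; 11];
  [:: 3; 5; 6; 9; 10; 11]; [:: 3; 5; 6; 8; 11]; [:: 3; 5; 6; 8; 10; 11];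
  [:: 3; 5; 6; 8; 9; 11]; [:: 3; 5; 6; 8; 9; 10; 11]; [:: 3; 5; 6; 7; 9];
  [:: 3; 5; 6; 7; 9; 11]; [:: 3; 5; 6; 7; 9; 10]; [:: 3; 5; 6; 7; 9; 10; 11];
  [:: 3; 5; 6; 7; 8; 10; 11]; [:: 3; 5; 6; 7; 8; 9];
  [:: 3; 5; 6; 7; 8; 9; 11]; [:: 3; 5; 6; 7; 8; 9; 10];
  [:: 3; 5; 6; 7; 8; 9; 10; 11]; [:: 3; 4; 7; 9; 10];
  [:: 3; 4; 7; 9; 10; 11]; [:: 3; 4; 7; 8; 9; 10];
  [:: 3; 4; 7; 8; 9; 10; 11]; [:: 3; 4; 6; 7; 9; 10; 11];
  [:: 3; 4; 6; 7; 8; 9]; [:: 3; 4; 6; 7; 8; 9; 11];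
  [:: 3; 4; 6; 7; 8; 9; 10]; [:: 3; 4; 6; 7; 8; 9; 10; 11];
  [:: 3; 4; 5; 8; 9; 10; 11]; [:: 3; 4; 5; 7; 8; 9; 10];
  [:: 3; 4; 5; 7; 8; 9; 10; 11]; [:: 3; 4; 5; 6; 8; 9; 11];
  [:: 3; 4; 5; 6; 8; 9; 10; 11]; [:: 3; 4; 5; 6; 7; 8; 9; 10; 11];
  [:: 2; 3; 6; 7; 10; 11]; [:: 2; 3; 6; 7; 9; 10];
  [:: 2; 3; 6; 7; 9; 10; 11]; [:: 2; 3; 6; 7; 8; 9; 10; 11];
  [:: 2; 3; 5; 7; 10; 11]; [:: 2; 3; 5; 7; 9; 10];
  [:: 2; 3; 5; 7; 9; 10; 11]; [:: 2; 3; 5; 7; 8; 11];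
  [:: 2; 3; 5; 7; 8; 10; 11]; [:: 2; 3; 5; 7; 8; 9];
  [:: 2; 3; 5; 7; 8; 9; 11]; [:: 2; 3; 5; 7; 8; 9; 10];
  [:: 2; 3; 5; 7; 8; 9; 10; 11]; [:: 2; 3; 5; 6; 9; 11];
  [:: 2; 3; 5; 6; 9; 10]; [:: 2; 3; 5; 6; 9; 10; 11]; [:: 2; 3; 5; 6; 8; 11];
  [:: 2; 3; 5; 6; 8; 10; 11]; [:: 2; 3; 5; 6; 8; 9; 11];
  [:: 2; 3; 5; 6; 8; 9; 10]; [:: 2; 3; 5; 6; 8; 9; 10; 11];
  [:: 2; 3; 5; 6; 7; 9; 11]; [:: 2; 3; 5; 6; 7; 9; 10];
  [:: 2; 3; 5; 6; 7; 9; 10; 11]; [:: 2; 3; 5; 6; 7; 8; 11];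
  [:: 2; 3; 5; 6; 7; 8; 10; 11]; [:: 2; 3; 5; 6; 7; 8; 9; 11];
  [:: 2; 3; 5; 6; 7; 8; 9; 10]; [:: 2; 3; 5; 6; 7; 8; 9; 10; 11];
  [:: 2; 3; 4; 5; 9; 10; 11]; [:: 2; 3; 4; 5; 8; 10; 11];
  [:: 2; 3; 4; 5; 8; 9; 10; 11]; [:: 2; 3; 4; 5; 7; 9; 10];
  [:: 2; 3; 4; 5; 7; 9; 10; 11]; [:: 2; 3; 4; 5; 7; 8; 11];
  [:: 2; 3; 4; 5; 7; 8; 10; 11]; [:: 2; 3; 4; 5; 7; 8; 9; 11];
  [:: 2; 3; 4; 5; 7; 8; 9; 10]; [:: 2; 3; 4; 5; 7; 8; 9; 10; 11];
  [:: 2; 3; 4; 5; 6; 7; 9; 10]; [:: 2; 3; 4; 5; 6; 7; 9; 10; 11];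
  [:: 2; 3; 4; 5; 6; 7; 8; 11]; [:: 2; 3; 4; 5; 6; 7; 8; 10; 11];
  [:: 2; 3; 4; 5; 6; 7; 8; 9; 10; 11]; [:: 1; 2; 5; 6; 9; 10];
  [:: 1; 2; 5; 6; 9; 10; 11]; [:: 1; 2; 5; 6; 8; 10; 11];
  [:: 1; 2; 5; 6; 8; 9; 11]; [:: 1; 2; 5; 6; 8; 9; 10; 11];
  [:: 1; 2; 5; 6; 7; 9; 10; 11]; [:: 1; 2; 5; 6; 7; 8; 10; 11];
  [:: 1; 2; 5; 6; 7; 8; 9; 11]; [:: 1; 2; 5; 6; 7; 8; 9; 10];
  [:: 1; 2; 5; 6; 7; 8; 9; 10; 11]; [:: 1; 2; 4; 6; 7; 9; 10; 11];
  [:: 1; 2; 4; 6; 7; 8; 9; 11]; [:: 1; 2; 4; 6; 7; 8; 9; 10; 11];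
  [:: 1; 2; 4; 5; 6; 7; 8; 9; 10; 11]; [:: 1; 2; 3; 5; 6; 7; 9; 10; 11];
  [:: 1; 2; 3; 5; 6; 7; 8; 10; 11]; [:: 1; 2; 3; 5; 6; 7; 8; 9; 11];
  [:: 1; 2; 3; 5; 6; 7; 8; 9; 10]; [:: 1; 2; 3; 5; 6; 7; 8; 9; 10; 11];
  [:: 1; 2; 3; 4; 5; 7; 8; 9; 10]; [:: 1; 2; 3; 4; 5; 7; 8; 9; 10; 11];
  [:: 1; 2; 3; 4; 5; 6; 8; 9; 11]; [:: 1; 2; 3; 4; 5; 6; 8; 9; 10; 11];
  [:: 1; 2; 3; 4; 5; 6; 7; 8; 9; 10; 11]].
Definition rep_masks := map mask_of_edges orbit_reps.
Definition all_masks := words [:: true; false] 12.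
Definition cube_perms := [seq inverse_perm (frame_edges w) | w <- cube_frames].

Definition open_mask m :=
  let E := mask m edge_ends in [&& true \in m, false \in m, connectedb E & ~~ on_face E].

(* The checks take the permutations [P] and representatives [M] as arguments so that
   [vm_compute] evaluates them only once. *)
Definition reps_cover (P : seq (seq nat)) (M : seq (seq bool)) :=
  all (fun m => if open_mask m then has (fun q => pullback q m \in M) P else true)
    all_masks.
Definition reps_inequivalent (P : seq (seq nat)) (M : seq (seq bool)) :=
  uniq M && all (fun r => all (fun q => (pullback q r \in M) ==> (pullback q r == r)) P) M.

Lemma reach_closed_masks : all (fun m => let E := mask m edge_ends in
  edge_closed E (reach E (head (0, 0)%N E).1)) all_masks.
Proof. by vm_compute. Qed.

Lemma rep_masks_ok : all (fun r => let E := mask r edge_ends in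
  [&& true \in r, false \in r, connectedb E & spans_dirs E]) rep_masks.
Proof. by vm_compute. Qed.

Lemma rep_masks_cover : reps_cover cube_perms rep_masks.
Proof. by vm_compute. Qed.

Lemma rep_masks_inequivalent : reps_inequivalent cube_perms rep_masks.
Proof. by vm_compute. Qed.

Lemma mem_all_masks m : size m = 12%N -> m \in all_masks.
Proof. by move=> sz_m; rewrite /all_masks -sz_m; apply: mem_words => b; case: b. Qed.

Lemma size_rep_masks r : r \in rep_masks -> size r = 12%N.
Proof. by case/mapP => ks _ ->; rewrite size_map size_iota. Qed.

Lemma reach_closed m : size m = 12%N ->
  let E := mask m edge_ends in edge_closed E (reach E (head (0, 0)%N E).1).
Proof. by move/mem_all_masks; apply: (allP reach_closed_masks). Qed.

Section Classification.
Variable R : realType.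

Lemma rep_incomplete_open r : r \in rep_masks -> incomplete_open R (edge_set r).
Proof.
move=> rM; have /and4P[tr fr conn dirs] := allP rep_masks_ok r rM.
have sz_r := size_rep_masks rM.
split; first exact: edge_set_sub.
- have /(nthP false)[k] := tr; rewrite sz_r => lt_k mk.
  by apply/set0Pn; exists (edge (nth (0, 0)%N edge_ends k)); rewrite edge_set_nth.
- have /(nthP false)[k] := fr; rewrite sz_r => lt_k mk.
  have kE : nth (0, 0)%N edge_ends k \in edge_ends by rewrite mem_nth ?size_edge_ends.
  by apply/eqP => full; have := edge_cube kE; rewrite -full edge_set_nth // mk.
- by apply/connectedbP; [apply: reach_closed | ].
- exact: spans_dirs_nonplanar.
Qed.

Lemma incomplete_open_mask m : size m = 12%N -> incomplete_open R (edge_set m) -> open_mask m.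
Proof.
move=> sz_m [_ nz ncube conn nplanar]; apply/and4P; split.
- case/set0Pn: nz => S /edge_set_nthP[k /andP[lt_k mk] _].
  by rewrite -mk mem_nth ?sz_m.
- apply: contraNT ncube => fm; rewrite eqEsubset edge_set_sub /=.
  apply/subsetP => S /cube_edgeP[x xE ->]; rewrite -(nth_index (0, 0)%N xE).
  have lt_x : (index x edge_ends < 12)%N by rewrite -size_edge_ends index_mem.
  rewrite edge_set_nth //; apply: contraNT fm => /negbTE <-.
  by rewrite mem_nth ?sz_m.
- by apply/connectedbP; [apply: reach_closed | ].
- by apply: contra_notN nplanar; apply: on_face_planar.
Qed.

Lemma rep_masks_same_orbit r r' : r \in rep_masks -> r' \in rep_masks ->
  same_orbit R (edge_set r) (edge_set r') -> r = r'.
Proof.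
move=> rM r'M [Q [t [/rotation_frame[w wF [-> ->]] img_r]]].
have sz_r' := size_rep_masks r'M.
have q_P : inverse_perm (frame_edges w) \in cube_perms.
  exact: (map_f (fun w => inverse_perm (frame_edges w)) wF).
set q := inverse_perm (frame_edges w) in img_r q_P *.
have sz_q : size q = 12%N.
  have /andP[_ /perm_size sz_p] := allP cube_frames_ok w wF.
  by rewrite size_map size_iota sz_p size_iota.
have sz_qr : size (pullback q r) = 12%N by rewrite size_map.
rewrite frame_edge_set // in img_r; have eq_r := esym (edge_set_inj sz_r' sz_qr img_r).
have /andP[_ /allP inequiv] := rep_masks_inequivalent.
by have := implyP (allP (inequiv r rM) q q_P); rewrite eq_r r'M => /(_ isT) /eqP.
Qed.

Lemma incomplete_open_cover S : incomplete_open R S ->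
  exists2 r, r \in rep_masks & same_orbit R S (edge_set r).
Proof.
move=> SO; have [sub _ _ _ _] := SO.
set m := edge_mask S; have eS : edge_set m = S := edge_maskK sub.
have sz_m : size m = 12%N := size_edge_mask S.
have m_open : open_mask m by apply: incomplete_open_mask; rewrite // eS.
have := allP rep_masks_cover m (mem_all_masks sz_m); rewrite m_open => /hasP[q /mapP[w wF ->] qM].
exists (pullback (inverse_perm (frame_edges w)) m) => //.
exists (frame_Q R w), (frame_t R w); split; first exact: frame_rotation.
by rewrite -eS frame_edge_set.
Qed.
End Classification.

Theorem mainTheorem2 (R : realType) :
  exists reps : seq {set {set cvert}},
    [/\ size reps = 122%N,
        forall S, S \in reps -> incomplete_open R S,
        forall i j, (i < size reps)%N -> (j < size reps)%N -> i <> j ->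
          ~ same_orbit R (nth set0 reps i) (nth set0 reps j)
      & forall S, incomplete_open R S -> exists2 S', S' \in reps & same_orbit R S S'].
Proof.
exists (map edge_set rep_masks); split.
- by rewrite size_map.
- by move=> S /mapP[r rM ->]; apply: rep_incomplete_open.
- rewrite size_map => i j lt_i lt_j neq_ij.
  rewrite (nth_map [::] set0 edge_set lt_i) (nth_map [::] set0 edge_set lt_j).
  move=> SO; have /eqP := rep_masks_same_orbit (mem_nth [::] lt_i) (mem_nth [::] lt_j) SO.
  by have /andP[uniq_M _] := rep_masks_inequivalent; rewrite nth_uniq // => /eqP.
- by move=> S /incomplete_open_cover[r rM SO]; exists (edge_set r); rewrite ?map_f.
Qed.
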